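(* Let $\mathbb{L}=(\mathcal{P},\mathcal{C},\parallel)$ be a Laguerre plane satisfying axioms (C) and (S). If $K,L,M,N$ are circles and $a,b,c,d$ are points such that $K\cap L=\{a\}$, $L\cap M=\{b\}$, $M\cap N=\{c\}$, $N\cap K=\{d\}$, then $(a,c,b,d)_{\triangle}$.
   Context: A Laguerre plane is a triple $(\mathcal{P},\mathcal{C},\parallel)$ where $\mathcal{P}$ is a set of points, $\mathcal{C}\subset 2^{\mathcal{P}}$ a set of circles and $\parallel$ an equivalence relation on $\mathcal{P}$ (parallelism; its classes are called generators) such that: (1) any three pairwise non-parallel points lie on a unique circle; (2) for every circle $K$ and non-parallel points $p\in K$, $q\notin K$ there is exactly one circle $L$ with $q\in L$ and $K\cap L=\{p\}$; (3) for every point $p$ and circle $K$ there is exactly one point $q\in K$ with $q\parallel p$; (4) some circle contains at least three but not all points. Circles $K,L$ are tangent at $p$ if $K\cap L=\{p\}$ or $K=L$ (with $p\in K$). For $p\in K$, $\langle p,K\rangle$ denotes the set of circles tangent to $K$ at $p$. Axiom (C): for any circles $K,L$ and any point $p\in K\setminus L$ there exists exactly one circle $M\in\langle p,K\rangle$ with $|M\cap L|=1$. Axiom (S): if $K,L,M,N$ are circles and $a,b,c,d$ points with $K\cap L=\{a\}$, $L\cap M=\{b\}$, $M\cap N=\{c\}$, $N\cap K=\{d\}$ and $a\nparallel c$, then there is a circle containing $a,b,c,d$. A quadruple $(a,b,c,d)$ of points is concyclic, written $(a,b,c,d)_{\triangle}$, if $a,b,c,d$ lie on a common circle, or $a\parallel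 b$, $c\parallel d$ and $a\nparallel c$. *)

(* A Laguerre plane is modelled with a point type [P],
   circles as subsets of [P] (predicates [P -> Prop]) belonging to a family
   [circ : (P -> Prop) -> Prop], and an equivalence relation [par]. *)
From Stdlib Require Import Classical.

Section LaguerreDefs.
Variable P : Type.

Definition meets_exactly (K L : P -> Prop) (p : P) : Prop :=
  forall x, (K x /\ L x) <-> x = p.

Definition tangent_at (K L : P -> Prop) (p : P) : Prop :=
  meets_exactly K L p \/ ((forall x, K x <-> L x) /\ K p).

Definition meet_in_one (M L : P -> Prop) : Prop :=
  exists p, meets_exactly M L p.

Record laguerre_plane (circ : (P -> Prop) -> Prop) (par : P -> P -> Prop)
  : Prop := {
  lp_par_refl : forall p, par p p;
  lp_par_sym : forall p q, par p q -> par q p;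
  lp_par_trans : forall p q r, par p q -> par q r -> par p r;
  lp_ax1 : forall p q r, ~ par p q -> ~ par q r -> ~ par p r ->
    exists K, circ K /\ K p /\ K q /\ K r /\
      forall K', circ K' -> K' p -> K' q -> K' r -> forall x, K' x <-> K x;
  lp_ax2 : forall K p q, circ K -> K p -> ~ K q -> ~ par p q ->
    exists L, circ L /\ L q /\ meets_exactly K L p /\
      forall L', circ L' -> L' q -> meets_exactly K L' p ->
        forall x, L' x <-> L x;
  lp_ax3 : forall p K, circ K ->
    exists q, K q /\ par q p /\ forall q', K q' -> par q' p -> q' = q;
  lp_ax4 : exists K, circ K /\
    (exists p q r, K p /\ K q /\ K r /\ p <> q /\ q <> r /\ p <> r) /\
    (exists x, ~ K x)
}.

Definition axiom_C (circ : (P -> Prop) -> Prop) : Prop :=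
  forall K L p, circ K -> circ L -> K p -> ~ L p ->
    exists M, circ M /\ tangent_at M K p /\ meet_in_one M L /\
      forall M', circ M' -> tangent_at M' K p -> meet_in_one M' L ->
        forall x, M' x <-> M x.

Definition axiom_S (circ : (P -> Prop) -> Prop) (par : P -> P -> Prop) : Prop :=
  forall K L M N a b c d, circ K -> circ L -> circ M -> circ N ->
    meets_exactly K L a -> meets_exactly L M b ->
    meets_exactly M N c -> meets_exactly N K d -> ~ par a c ->
    exists O, circ O /\ O a /\ O b /\ O c /\ O d.

Definition concyclic (circ : (P -> Prop) -> Prop) (par : P -> P -> Prop)
  (a b c d : P) : Prop :=
  (exists O, circ O /\ O a /\ O b /\ O c /\ O d) \/
  (par a b /\ par c d /\ ~ par a c).

End LaguerreDefs.

Arguments meets_exactly {P}.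
Arguments tangent_at {P}.
Arguments meet_in_one {P}.
Arguments laguerre_plane {P}.
Arguments axiom_C {P}.
Arguments axiom_S {P}.
Arguments concyclic {P}.

(** When [a] and [c] are not parallel, axiom (S) puts all four touching points on
    one circle.  Otherwise [a ∥ c], and since a circle meets each generator once,
    [a = c] forces the four points to coincide, while [a ≠ c] forces [b ∥ d]
    (a circle through [b, c, d, a] would contain the parallel points [a ≠ c]) and
    [a ∦ b] (else [a = b], and then [b, c] would be distinct parallel points of [M]). *)
From Stdlib Require Import Classical.

Section LaguerrePlane.
Set Implicit Arguments.
Variables (P : Type) (circ : (P -> Prop) -> Prop) (par : P -> P -> Prop).
Hypothesis HL : laguerre_plane circ par.

Lemma meets_exactly_mem (K L : P -> Prop) p : meets_exactly K L p -> K p /\ L p.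
Proof. intros H; exact (proj2 (H p) eq_refl). Qed.

Lemma par_on_circle_eq (O : P -> Prop) x y :
  circ O -> O x -> O y -> par x y -> x = y.
Proof.
  intros HO Hx Hy Hxy.
  destruct (lp_ax3 _ _ _ HL x O HO) as [q [_ [_ Hq]]].
  rewrite (Hq x Hx (lp_par_refl _ _ _ HL x)).
  exact (eq_sym (Hq y Hy (lp_par_sym _ _ _ HL _ _ Hxy))).
Qed.

Section TouchingQuadrilateral.
Hypothesis HS : axiom_S circ par.
Variables (K L M N : P -> Prop) (a b c d : P).
Hypotheses (cK : circ K) (cL : circ L) (cM : circ M) (cN : circ N).
Hypotheses (hKL : meets_exactly K L a) (hLM : meets_exactly L M b)
  (hMN : meets_exactly M N c) (hNK : meets_exactly N K d).

Lemma touching_degenerate : a = c -> b = a /\ d = a.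
Proof.
  intros <-.
  destruct (meets_exactly_mem hKL) as [Ka La].
  destruct (meets_exactly_mem hMN) as [Ma Na].
  split; [exact (eq_sym (proj1 (hLM a) (conj La Ma)))
         | exact (eq_sym (proj1 (hNK a) (conj Na Ka)))].
Qed.

Lemma touching_par_bd : par a c -> a <> c -> par b d.
Proof.
  intros Hac Hne. apply NNPP. intros Hbd.
  destruct (HS cL cM cN cK hLM hMN hNK hKL Hbd)
    as [O [cO [_ [Oc [_ Oa]]]]].
  exact (Hne (par_on_circle_eq cO Oa Oc Hac)).
Qed.

Lemma touching_npar_ab : par a c -> a <> c -> ~ par a b.
Proof.
  intros Hac Hne Hab.
  destruct (meets_exactly_mem hKL) as [_ La].
  destruct (meets_exactly_mem hLM) as [Lb Mb].
  destruct (meets_exactly_mem hMN) as [Mc _].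
  pose proof (par_on_circle_eq cL La Lb Hab) as <-.
  exact (Hne (par_on_circle_eq cM Mb Mc Hac)).
Qed.

End TouchingQuadrilateral.
End LaguerrePlane.

Theorem corollary2p1 (P : Type) (circ : (P -> Prop) -> Prop)
  (par : P -> P -> Prop)
  (HL : laguerre_plane circ par) (HC : axiom_C circ) (HS : axiom_S circ par)
  (K L M N : P -> Prop) (a b c d : P) :
  circ K -> circ L -> circ M -> circ N ->
  meets_exactly K L a -> meets_exactly L M b ->
  meets_exactly M N c -> meets_exactly N K d ->
  concyclic circ par a c b d.
Proof.
  intros cK cL cM cN hKL hLM hMN hNK.
  destruct (classic (par a c)) as [Hac | Hac].
  - destruct (classic (a = c)) as [<- | Hne].
    + destruct (touching_degenerate hKL hLM hMN hNK eq_refl)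
        as [-> ->].
      left. exists K. destruct (meets_exactly_mem hKL). tauto.
    + right. split; [exact Hac | split].
      * exact (touching_par_bd HL HS cK cL cM cN hKL hLM hMN hNK Hac Hne).
      * exact (touching_npar_ab HL cL cM hKL hLM hMN Hac Hne).
  - destruct (HS K L M N a b c d cK cL cM cN hKL hLM hMN hNK Hac)
      as [O [cO [Oa [Ob [Oc Od]]]]].
    left. exists O. tauto.
Qed.
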